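(* Let $p,q\in\Bbbk^\times$. Then $A(q)\cong A(p)$ if and only if $p=q^{\pm1}$.
   Context: $\Bbbk$ is an algebraically closed field of characteristic zero. Paths are written left to right. Let $Q$ be the quiver with vertices $e_1,e_2$, arrows $a,c:e_1\to e_2$ and $b,d:e_2\to e_1$; for $q\in\Bbbk^\times$, $A(q)=\Bbbk Q/(ab-cd,\ ba-q\,dc)$. *)

From HB Require Import structures.
From mathcomp Require Import all_boot all_order all_algebra.
Set Implicit Arguments. Unset Strict Implicit. Unset Printing Implicit Defensive.
Import GRing.Theory.
Local Open Scope ring_scope.

(* Quiver Q: vertices e1,e2; arrows a,c : e1 -> e2, b,d : e2 -> e1.
   Paths are written left to right, so the path "a then b" is the product a*b,
   and an arrow x : ei -> ej satisfies x = ei * x * ej. *)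

(* Elements (e1,e2,a,b,c,d) of a K-algebra C satisfy the defining relations
   of A(q) = kQ/(ab - cd, ba - q dc): the relations of the path algebra kQ
   (complete set of orthogonal idempotents, arrows between the right vertices)
   together with ab = cd and ba = q dc. *)
Definition Aq_rels (K : fieldType) (q : K) (C : algType K)
    (e1 e2 a b c d : C) : Prop :=
  [/\ e1 + e2 = 1, e1 * e1 = e1, e2 * e2 = e2, e1 * e2 = 0 & e2 * e1 = 0] /\
  [/\ a = e1 * a * e2, c = e1 * c * e2, b = e2 * b * e1 & d = e2 * d * e1] /\
  (a * b = c * d /\ b * a = q *: (d * c)).

(* (A; e1,e2,a,b,c,d) is a presentation of A(q): the generators satisfy the
   relations and A is universal (initial) among K-algebras with such elements,
   i.e. A is the quotient of the free algebra on the generators (equivalently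
   of kQ) by the ideal generated by the relations. *)
Definition is_Aq (K : fieldType) (q : K) (A : algType K)
    (e1 e2 a b c d : A) : Prop :=
  Aq_rels q e1 e2 a b c d /\
  forall (C : algType K) (x1 x2 xa xb xc xd : C),
    Aq_rels q x1 x2 xa xb xc xd ->
    exists f : {lrmorphism A -> C},
      ([/\ f e1 = x1, f e2 = x2 & f a = xa] /\ [/\ f b = xb, f c = xc & f d = xd])
      /\ forall g : {lrmorphism A -> C},
           ([/\ g e1 = x1, g e2 = x2 & g a = xa] /\ [/\ g b = xb, g c = xc & g d = xd]) ->
           g =1 f.

Definition alg_iso (K : fieldType) (A B : algType K) : Prop :=
  exists f : {lrmorphism A -> B}, bijective f.

(* If part: the universal property makes two presentations with the same
   parameter isomorphic, and (e1, e2, c, d, a, b) presents A(q^-1) whenever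
   (e1, e2, a, b, c, d) presents A(q).
   Only if part: an isomorphism A(q) ~ A(p) gives a surjection psi of A(q)
   onto the 12-dimensional algebra T(p) = A(p)/J^3, J the arrow ideal.  The
   vertex components of psi(e1) are (1,0) or (0,1) (equal ones would leave the
   arrows a, c out of the image), and the vertex swap of T(p) reduces to
   (1,0).  Then psi maps a, c into span(a,c) + J^2 and b, d into
   span(b,d) + J^2 through 2x2 matrices M, N which are invertible because psi
   is onto, and the relations ab = cd, ba = q dc read in J^2/J^3 force M, N
   to be both diagonal (so p = q) or both antidiagonal (so pq = 1). *)

From HB Require Import structures.
From mathcomp Require Import all_boot all_order all_algebra.
From mathcomp Require Import ring.
Import GRing.Theory.
Local Open Scope ring_scope.
Set Implicit Arguments. Unset Strict Implicit.

Section Presentations.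
Variable K : fieldType.

Lemma rels_morph (q : K) (A C : algType K) (f : {lrmorphism A -> C})
    (e1 e2 a b c d : A) :
  Aq_rels q e1 e2 a b c d -> Aq_rels q (f e1) (f e2) (f a) (f b) (f c) (f d).
Proof.
case=> [[sum_e idem1 idem2 e12 e21] [[ha hc hb hd] [hab hba]]].
split; [split | split; [split | split]]; rewrite -?rmorphD -?rmorphM.
- by rewrite sum_e rmorph1.
- by rewrite idem1.
- by rewrite idem2.
- by rewrite e12 rmorph0.
- by rewrite e21 rmorph0.
- by rewrite -ha.
- by rewrite -hc.
- by rewrite -hb.
- by rewrite -hd.
- by rewrite hab.
- by rewrite -linearZ hba.
Qed.

Lemma Aq_rels_e2 (q : K) (A : algType K) (e1 e2 a b c d : A) :
  Aq_rels q e1 e2 a b c d -> e2 = 1 - e1.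
Proof. by case=> [[sum_e _ _ _ _] _]; rewrite -sum_e addrC addKr. Qed.

Lemma Aq_morph_eq (q : K) (A C : algType K) (e1 e2 a b c d : A)
    (f g : {lrmorphism A -> C}) :
  is_Aq q e1 e2 a b c d ->
  f e1 = g e1 -> f a = g a -> f b = g b -> f c = g c -> f d = g d -> f =1 g.
Proof.
move=> [rels univ] f1 fa fb fc fd.
have f2 : f e2 = g e2.
  by rewrite (Aq_rels_e2 rels) !rmorphB !rmorph1; congr (_ - _).
have [h [_ h_uniq]] := univ C _ _ _ _ _ _ (rels_morph g rels).
have gh := h_uniq g (conj (And3 erefl erefl erefl) (And3 erefl erefl erefl)).
by move=> x; rewrite gh h_uniq.
Qed.

Lemma is_Aq_iso (q : K) (A B : algType K) (e1 e2 a b c d : A)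
    (e1' e2' a' b' c' d' : B) :
  is_Aq q e1 e2 a b c d -> is_Aq q e1' e2' a' b' c' d' -> alg_iso A B.
Proof.
move=> HA HB.
have [f [[[f1 f2 fa] [fb fc fd]] _]] := HA.2 B _ _ _ _ _ _ HB.1.
have [g [[[g1 g2 ga] [gb gc gd]] _]] := HB.2 A _ _ _ _ _ _ HA.1.
exists f; exists g => x.
  by apply: (Aq_morph_eq (f := g \o f) (g := idfun) HA) => /=;
    rewrite ?f1 ?fa ?fb ?fc ?fd.
by apply: (Aq_morph_eq (f := f \o g) (g := idfun) HB) => /=;
  rewrite ?g1 ?ga ?gb ?gc ?gd.
Qed.

Lemma Aq_rels_swap (q r : K) (A : algType K) (e1 e2 a b c d : A) :
  r * q = 1 -> Aq_rels q e1 e2 a b c d -> Aq_rels r e1 e2 c d a b.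
Proof.
move=> rq [idem [[ha hc hb hd] [hab hba]]]; do 2!split => //.
by rewrite hba scalerA rq scale1r.
Qed.

Lemma is_Aq_swap (q : K) (A : algType K) (e1 e2 a b c d : A) :
  q != 0 -> is_Aq q^-1 e1 e2 a b c d -> is_Aq q e1 e2 c d a b.
Proof.
move=> q0 [rels univ]; split; first exact: Aq_rels_swap (mulfV q0) rels.
move=> C x1 x2 xa xb xc xd /(Aq_rels_swap (mulVf q0)) /univ.
move=> [f [[[f1 f2 fc] [fd fa fb]] f_uniq]].
exists f; split=> [//|g [[g1 g2 gc] [gd ga gb]]].
exact: f_uniq.
Qed.

End Presentations.

Section FieldFacts.
Variable K : fieldType.

Lemma eq_lincomb2 (c1 c2 : K) {x1 y1 x2 y2 x y : K} :
  x1 = y1 -> x2 = y2 -> x - y = c1 * (x1 - y1) + c2 * (x2 - y2) -> x = y.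
Proof. by move=> -> -> /eqP; rewrite !subrr !mulr0 addr0 subr_eq0 => /eqP. Qed.
Arguments eq_lincomb2 c1 c2 {x1 y1 x2 y2 x y}.

Lemma field_idempotent (x : K) : x * x = x -> x = 0 \/ x = 1.
Proof.
move=> xx; have /eqP : x * (x - 1) = 0 by rewrite mulrBr mulr1 xx subrr.
by rewrite mulf_eq0 subr_eq0 => /orP[] /eqP; [left | right].
Qed.

Lemma det2_neq0 (m11 m21 m12 m22 : K) :
  (forall x y, x * m11 + y * m21 = 0 -> x * m12 + y * m22 = 0 -> x = 0 /\ y = 0) ->
  m11 * m22 - m12 * m21 != 0.
Proof.
move=> inj; apply/eqP => det0.
have [m21z /eqP] : m21 = 0 /\ - m11 = 0.
  by apply: inj; [ring | apply: (eq_lincomb2 (-1) 0 det0 det0); ring].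
rewrite oppr_eq0 => /eqP m11z.
have [m22z /eqP] : m22 = 0 /\ - m12 = 0.
  by apply: inj; [apply: (eq_lincomb2 1 0 det0 det0); ring | ring].
rewrite oppr_eq0 => /eqP m12z.
have [/eqP] : (1 : K) = 0 /\ (0 : K) = 0 by apply: inj; rewrite ?m11z ?m21z ?m12z ?m22z; ring.
by rewrite oner_eq0.
Qed.

Lemma diag_or_antidiag (m11 m21 m12 m22 n11 n21 n12 n22 : K) :
  m11 * m22 - m12 * m21 != 0 -> n11 * n22 - n12 * n21 != 0 ->
  m11 * n21 = 0 -> m12 * n22 = 0 -> m21 * n11 = 0 -> m22 * n12 = 0 ->
  [/\ m12 = 0, m21 = 0, n12 = 0 & n21 = 0] \/
  [/\ m11 = 0, m22 = 0, n11 = 0 & n22 = 0].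
Proof.
have cancel_l (x y : K) : x != 0 -> x * y = 0 -> y = 0.
  by move=> x0 /eqP; rewrite (mulrI_eq0 _ (mulfI x0)) => /eqP.
have cancel_r (x y : K) : y != 0 -> x * y = 0 -> x = 0.
  by move=> y0 /eqP; rewrite (mulIr_eq0 _ (mulIf y0)) => /eqP.
move=> dM dN h11 h12 h21 h22; have [m12z | m12nz] := eqVneq m12 0.
  move: dM; rewrite m12z mul0r subr0 mulf_eq0 negb_or => /andP[m11nz m22nz].
  have n21z := cancel_l _ _ m11nz h11; have n12z := cancel_l _ _ m22nz h22.
  move: dN; rewrite n12z mul0r subr0 mulf_eq0 negb_or => /andP[n11nz _].
  by left; split=> //; apply: cancel_r n11nz h21.
have n22z := cancel_l _ _ m12nz h12.
move: dN; rewrite n22z mulr0 sub0r oppr_eq0 mulf_eq0 negb_or => /andP[n12nz n21nz].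
have m22z := cancel_r _ _ n12nz h22; have m11z := cancel_r _ _ n21nz h11.
move: dM; rewrite m22z mulr0 sub0r oppr_eq0 mulf_eq0 negb_or => /andP[_ m21nz].
by right; split=> //; apply: cancel_l m21nz h21.
Qed.

(* With a' = m11 a + m21 c, c' = m12 a + m22 c, b' = n11 b + n21 d and
   d' = n12 b + n22 d, the hypotheses are the ab, ad, cb coordinates of
   a'b' = c'd' and the dc, bc, da coordinates of b'a' = q d'c' in T(p). *)
Lemma quadratic_relations_param (p q m11 m21 m12 m22 n11 n21 n12 n22 : K) :
  q != 0 -> m11 * m22 - m12 * m21 != 0 -> n11 * n22 - n12 * n21 != 0 ->
  m11 * n11 + m21 * n21 = m12 * n12 + m22 * n22 ->
  m11 * n21 = m12 * n22 -> m21 * n11 = m22 * n12 ->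
  p * (n11 * m11) + n21 * m21 = q * (p * (n12 * m12) + n22 * m22) ->
  n11 * m21 = q * (n12 * m22) -> n21 * m11 = q * (n22 * m12) ->
  p = q \/ p = q^-1.
Proof.
move=> q0 dM dN ab ad cb dc bc da.
have [q1 | q1] := eqVneq q 1.
  rewrite q1 in dc; left; apply/eqP; rewrite q1 -subr_eq0; apply/eqP.
  have /eqP : (p - 1) * (m11 * n11 - m12 * n12) = 0.
    by apply: (eq_lincomb2 1 (-1) dc ab); ring.
  rewrite mulf_eq0 => /orP[/eqP // | /eqP Xeq]; exfalso.
  have m11N : m11 * (n11 * n22 - n12 * n21) = 0.
    by apply: (eq_lincomb2 n22 (- n12) Xeq ad); ring.
  have m12N : m12 * (n11 * n22 - n12 * n21) = 0.
    by apply: (eq_lincomb2 n21 (- n11) Xeq ad); ring.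
  move: m11N m12N dM => /eqP; rewrite mulf_eq0 (negPf dN) orbF => /eqP->.
  by move=> /eqP; rewrite mulf_eq0 (negPf dN) orbF => /eqP->; rewrite !mul0r subrr eqxx.
have q1' : 1 - q != 0 by rewrite subr_eq0 eq_sym.
have m12n22 : m12 * n22 * (1 - q) = 0 by apply: (eq_lincomb2 (-1) 1 ad da); ring.
have m22n12 : m22 * n12 * (1 - q) = 0 by apply: (eq_lincomb2 (-1) 1 cb bc); ring.
move: m12n22 m22n12 => /eqP; rewrite mulf_eq0 (negPf q1') orbF => /eqP h12.
move=> /eqP; rewrite mulf_eq0 (negPf q1') orbF => /eqP h22.
have h11 : m11 * n21 = 0 by rewrite ad h12.
have h21 : m21 * n11 = 0 by rewrite cb h22.
have [[m12z m21z n12z n21z] | [m11z m22z n11z n22z]] :=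
  diag_or_antidiag dM dN h11 h12 h21 h22.
  move: dM dN; rewrite m12z m21z n12z !mul0r !subr0 !mulf_eq0 !negb_or.
  move=> /andP[m11nz _] /andP[n11nz _]; left.
  apply: (mulIf (mulf_neq0 m11nz n11nz)).
  by apply: (eq_lincomb2 1 (-q) dc ab); rewrite m12z m21z n12z n21z; ring.
move: dM dN; rewrite m11z n11z !mul0r !sub0r !oppr_eq0 !mulf_eq0 !negb_or.
move=> /andP[m12nz _] /andP[n12nz _]; right.
have pq : p * q * (m12 * n12) = 1 * (m12 * n12).
  by apply: (eq_lincomb2 (-1) 1 dc ab); rewrite m11z m22z n11z n22z; ring.
by rewrite -[p](mulfK q0) (mulIf (mulf_neq0 m12nz n12nz) pq) mul1r.
Qed.

End FieldFacts.

(* Coordinates in the basis e1, e2, a, c, b, d, ab = cd, ad, cb, dc, bc, da of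
   T(p) = A(p)/J^3, where ba = p dc.  The parameter p does not occur in the
   fields; it indexes the type so that each T(p) carries its own product. *)
Record trunc (K : fieldType) (p : K) := Trunc {
  coef_e1 : K; coef_e2 : K; coef_a : K; coef_c : K; coef_b : K; coef_d : K;
  coef_ab : K; coef_ad : K; coef_cb : K; coef_dc : K; coef_bc : K; coef_da : K }.
Arguments Trunc {K p}.

Section Trunc.
Variables (K : fieldType) (p : K).
Local Notation T := (trunc p).

Definition trunc_tuple (x : T) :=
  (coef_e1 x, coef_e2 x, coef_a x, coef_c x, coef_b x, coef_d x,
   coef_ab x, coef_ad x, coef_cb x, coef_dc x, coef_bc x, coef_da x).
Definition tuple_trunc (t : K * K * K * K * K * K * K * K * K * K * K * K) : T :=
  let: (x1, x2, xa, xc, xb, xd, xab, xad, xcb, xdc, xbc, xda) := t in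
  Trunc x1 x2 xa xc xb xd xab xad xcb xdc xbc xda.
Lemma trunc_tupleK : cancel trunc_tuple tuple_trunc. Proof. by case. Qed.
HB.instance Definition _ := Choice.copy T (can_type trunc_tupleK).

Definition trunc_map (f : K -> K) (x : T) : T :=
  Trunc (f (coef_e1 x)) (f (coef_e2 x)) (f (coef_a x)) (f (coef_c x))
        (f (coef_b x)) (f (coef_d x)) (f (coef_ab x)) (f (coef_ad x))
        (f (coef_cb x)) (f (coef_dc x)) (f (coef_bc x)) (f (coef_da x)).
Definition trunc_map2 (f : K -> K -> K) (x y : T) : T :=
  Trunc (f (coef_e1 x) (coef_e1 y)) (f (coef_e2 x) (coef_e2 y))
        (f (coef_a x) (coef_a y)) (f (coef_c x) (coef_c y))
        (f (coef_b x) (coef_b y)) (f (coef_d x) (coef_d y))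
        (f (coef_ab x) (coef_ab y)) (f (coef_ad x) (coef_ad y))
        (f (coef_cb x) (coef_cb y)) (f (coef_dc x) (coef_dc y))
        (f (coef_bc x) (coef_bc y)) (f (coef_da x) (coef_da y)).

Definition trunc_zero : T := Trunc 0 0 0 0 0 0 0 0 0 0 0 0.
Definition trunc_one : T := Trunc 1 1 0 0 0 0 0 0 0 0 0 0.
Definition trunc_add (x y : T) := trunc_map2 +%R x y.
Definition trunc_opp (x : T) := trunc_map -%R x.
Definition trunc_scale (k : K) (x : T) := trunc_map ( *%R k) x.
Definition trunc_mul (x y : T) : T := Trunc
  (coef_e1 x * coef_e1 y) (coef_e2 x * coef_e2 y)
  (coef_e1 x * coef_a y + coef_a x * coef_e2 y)
  (coef_e1 x * coef_c y + coef_c x * coef_e2 y)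
  (coef_e2 x * coef_b y + coef_b x * coef_e1 y)
  (coef_e2 x * coef_d y + coef_d x * coef_e1 y)
  (coef_e1 x * coef_ab y + coef_ab x * coef_e1 y
     + coef_a x * coef_b y + coef_c x * coef_d y)
  (coef_e1 x * coef_ad y + coef_ad x * coef_e1 y + coef_a x * coef_d y)
  (coef_e1 x * coef_cb y + coef_cb x * coef_e1 y + coef_c x * coef_b y)
  (coef_e2 x * coef_dc y + coef_dc x * coef_e2 y
     + p * (coef_b x * coef_a y) + coef_d x * coef_c y)
  (coef_e2 x * coef_bc y + coef_bc x * coef_e2 y + coef_b x * coef_c y)
  (coef_e2 x * coef_da y + coef_da x * coef_e2 y + coef_d x * coef_a y).

Ltac trunc_unfold :=
  cbn; rewrite /trunc_add /trunc_opp /trunc_scale /trunc_mul /trunc_map2 /trunc_map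
               /trunc_zero /trunc_one /=.

Ltac trunc_ring :=
  repeat intro; repeat match goal with x : trunc _ |- _ => destruct x end;
  trunc_unfold; congr Trunc; ring.

Lemma trunc_addA : associative trunc_add. Proof. by trunc_ring. Qed.
Lemma trunc_addC : commutative trunc_add. Proof. by trunc_ring. Qed.
Lemma trunc_add0r : left_id trunc_zero trunc_add. Proof. by trunc_ring. Qed.
Lemma trunc_addNr : left_inverse trunc_zero trunc_opp trunc_add. Proof. by trunc_ring. Qed.
HB.instance Definition _ :=
  GRing.isZmodule.Build T trunc_addA trunc_addC trunc_add0r trunc_addNr.

Lemma trunc_scaleA a b (x : T) : trunc_scale a (trunc_scale b x) = trunc_scale (a * b) x.
Proof. by trunc_ring. Qed.
Lemma trunc_scale1r : left_id 1 trunc_scale. Proof. by trunc_ring. Qed.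
Lemma trunc_scaleDr : right_distributive trunc_scale +%R. Proof. by trunc_ring. Qed.
Lemma trunc_scaleDl (x : T) : {morph trunc_scale^~ x : a b / a + b}.
Proof. by trunc_ring. Qed.
HB.instance Definition _ := GRing.Zmodule_isLmodule.Build K T
  trunc_scaleA trunc_scale1r trunc_scaleDr trunc_scaleDl.

Lemma trunc_mulA : associative trunc_mul. Proof. by trunc_ring. Qed.
Lemma trunc_mul1r : left_id trunc_one trunc_mul. Proof. by trunc_ring. Qed.
Lemma trunc_mulr1 : right_id trunc_one trunc_mul. Proof. by trunc_ring. Qed.
Lemma trunc_mulDl : left_distributive trunc_mul +%R. Proof. by trunc_ring. Qed.
Lemma trunc_mulDr : right_distributive trunc_mul +%R. Proof. by trunc_ring. Qed.
Lemma trunc_one_neq0 : trunc_one != 0.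
Proof. by apply/eqP => /(congr1 (@coef_e1 _ _))/eqP; rewrite oner_eq0. Qed.
HB.instance Definition _ := GRing.Zmodule_isNzRing.Build T
  trunc_mulA trunc_mul1r trunc_mulr1 trunc_mulDl trunc_mulDr trunc_one_neq0.

Lemma trunc_scaleAl k (x y : T) : k *: (x * y) = k *: x * y. Proof. by trunc_ring. Qed.
HB.instance Definition _ := GRing.Lmodule_isLalgebra.Build K T trunc_scaleAl.
Lemma trunc_scaleAr k (x y : T) : k *: (x * y) = x * (k *: y). Proof. by trunc_ring. Qed.
HB.instance Definition _ := GRing.Lalgebra_isAlgebra.Build K T trunc_scaleAr.

Lemma trunc_scaleE k (x : T) : k *: x =
  Trunc (k * coef_e1 x) (k * coef_e2 x) (k * coef_a x) (k * coef_c x)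
        (k * coef_b x) (k * coef_d x) (k * coef_ab x) (k * coef_ad x)
        (k * coef_cb x) (k * coef_dc x) (k * coef_bc x) (k * coef_da x).
Proof. by []. Qed.

Lemma trunc_eta (x : T) : x =
  Trunc (coef_e1 x) (coef_e2 x) (coef_a x) (coef_c x) (coef_b x) (coef_d x)
        (coef_ab x) (coef_ad x) (coef_cb x) (coef_dc x) (coef_bc x) (coef_da x).
Proof. by case: x. Qed.

Lemma coef_e1M (x y : T) : coef_e1 (x * y) = coef_e1 x * coef_e1 y.
Proof. by []. Qed.

Lemma coef_e2M (x y : T) : coef_e2 (x * y) = coef_e2 x * coef_e2 y.
Proof. by []. Qed.

Definition trunc_e1 : T := Trunc 1 0 0 0 0 0 0 0 0 0 0 0.
Definition trunc_e2 : T := Trunc 0 1 0 0 0 0 0 0 0 0 0 0.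
Definition trunc_a : T := Trunc 0 0 1 0 0 0 0 0 0 0 0 0.
Definition trunc_c : T := Trunc 0 0 0 1 0 0 0 0 0 0 0 0.
Definition trunc_b : T := Trunc 0 0 0 0 1 0 0 0 0 0 0 0.
Definition trunc_d : T := Trunc 0 0 0 0 0 1 0 0 0 0 0 0.

Lemma trunc_rels : Aq_rels p trunc_e1 trunc_e2 trunc_a trunc_b trunc_c trunc_d.
Proof. by do !split; trunc_ring. Qed.

Lemma trunc_quotient (A : algType K) (e1 e2 a b c d : A) :
  is_Aq p e1 e2 a b c d -> exists rho : {lrmorphism A -> T}, forall t, exists x, rho x = t.
Proof.
move=> [_ univ]; have [rho [[[r1 r2 ra] [rb rc rd]] _]] := univ T _ _ _ _ _ _ trunc_rels.
exists rho => t.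
exists (coef_e1 t *: e1 + coef_e2 t *: e2 + coef_a t *: a + coef_c t *: c
  + coef_b t *: b + coef_d t *: d + coef_ab t *: (a * b) + coef_ad t *: (a * d)
  + coef_cb t *: (c * b) + coef_dc t *: (d * c) + coef_bc t *: (b * c)
  + coef_da t *: (d * a)).
have rhoM x y : rho (x * y) = rho x * rho y by rewrite rmorphM.
rewrite !linearD !linearZ /= !rhoM r1 r2 ra rb rc rd.
rewrite [LHS]trunc_eta; case: t => * /=; congr Trunc; cbn; ring.
Qed.

Definition in12 (x : T) :=
  [/\ coef_e1 x = 0, coef_e2 x = 0, coef_b x = 0 & coef_d x = 0].
Definition in21 (y : T) :=
  [/\ coef_e1 y = 0, coef_e2 y = 0, coef_a y = 0 & coef_c y = 0].

Lemma corner12 (E x : T) :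
  coef_e1 E = 1 -> coef_e2 E = 0 -> in12 (E * x * (1 - E)).
Proof. by move=> E1 E2; split; trunc_unfold; rewrite ?E1 ?E2; ring. Qed.

Lemma corner21 (E x : T) :
  coef_e1 E = 1 -> coef_e2 E = 0 -> in21 ((1 - E) * x * E).
Proof. by move=> E1 E2; split; trunc_unfold; rewrite ?E1 ?E2; ring. Qed.

Lemma mul_in12_in21 (x y : T) : in12 x -> in21 y ->
  [/\ coef_ab (x * y) = coef_a x * coef_b y + coef_c x * coef_d y,
      coef_ad (x * y) = coef_a x * coef_d y
    & coef_cb (x * y) = coef_c x * coef_b y].
Proof.
by move=> [x1 x2 xb xd] [y1 y2 ya yc]; split; trunc_unfold;
  rewrite ?x1 ?x2 ?xb ?xd ?y1 ?y2 ?ya ?yc; ring.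
Qed.

Lemma mul_in21_in12 (y x : T) : in21 y -> in12 x ->
  [/\ coef_dc (y * x) = p * (coef_b y * coef_a x) + coef_d y * coef_c x,
      coef_bc (y * x) = coef_b y * coef_c x
    & coef_da (y * x) = coef_d y * coef_a x].
Proof.
by move=> [y1 y2 ya yc] [x1 x2 xb xd]; split; trunc_unfold;
  rewrite ?x1 ?x2 ?xb ?xd ?y1 ?y2 ?ya ?yc; ring.
Qed.

(* The vertex swap e1 <-> e2, a |-> p d, b |-> c, c |-> b, d |-> a, which
   respects ab = cd and ba = p dc. *)
Definition trunc_flip (x : T) : T :=
  Trunc (coef_e2 x) (coef_e1 x) (coef_d x) (coef_b x) (coef_c x) (p * coef_a x)
        (coef_dc x) (p * coef_da x) (coef_bc x) (p * coef_ab x) (coef_cb x)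
        (p * coef_ad x).

Lemma trunc_flip_is_zmod_morphism : zmod_morphism trunc_flip.
Proof. by rewrite /trunc_flip; trunc_ring. Qed.
Lemma trunc_flip_is_monoid_morphism : monoid_morphism trunc_flip.
Proof. by rewrite /trunc_flip; split; trunc_ring. Qed.
Lemma trunc_flip_is_scalable : scalable trunc_flip.
Proof. by rewrite /trunc_flip; trunc_ring. Qed.
HB.instance Definition _ :=
  GRing.isZmodMorphism.Build _ _ trunc_flip trunc_flip_is_zmod_morphism.
HB.instance Definition _ :=
  GRing.isMonoidMorphism.Build _ _ trunc_flip trunc_flip_is_monoid_morphism.
HB.instance Definition _ :=
  GRing.isScalable.Build _ _ _ _ trunc_flip trunc_flip_is_scalable.

Lemma trunc_flip_surj (A : algType K) (psi : {lrmorphism A -> T}) :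
  p != 0 -> (forall t, exists x, psi x = t) -> forall t, exists x, trunc_flip (psi x) = t.
Proof.
move=> p0 psi_surj t.
have [x psix] := psi_surj (Trunc (coef_e2 t) (coef_e1 t) (coef_d t / p) (coef_b t)
  (coef_c t) (coef_a t) (coef_dc t / p) (coef_da t / p) (coef_bc t) (coef_ab t)
  (coef_cb t) (coef_ad t / p)).
by exists x; rewrite psix {psix}; case: t => *; rewrite /trunc_flip /=; congr Trunc; field.
Qed.

Definition ac_form (la lc be : K) (x : T) :=
  la * coef_a x + lc * coef_c x - be * (coef_e1 x - coef_e2 x).

(* Multiplicative because ac_form is a derivation twisted by the vertex
   components: ac_form (x y) = coef_e1 x * ac_form y + ac_form x * coef_e2 y;
   its [be] part is inner, so that it can vanish on any lift of e1. *)
Definition ac_collapse (la lc be : K) (x : T) : T :=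
  Trunc (coef_e1 x) (coef_e2 x) (ac_form la lc be x) 0 0 0 0 0 0 0 0 0.

Lemma ac_form0 (x : T) : ac_form 0 0 0 x = 0.
Proof. by rewrite /ac_form; ring. Qed.

Section ACCollapse.
Variables la lc be : K.

Lemma ac_collapse_is_zmod_morphism : zmod_morphism (ac_collapse la lc be).
Proof. by rewrite /ac_collapse /ac_form; trunc_ring. Qed.
Lemma ac_collapse_is_monoid_morphism : monoid_morphism (ac_collapse la lc be).
Proof. by rewrite /ac_collapse /ac_form; split; trunc_ring. Qed.
Lemma ac_collapse_is_scalable : scalable (ac_collapse la lc be).
Proof. by rewrite /ac_collapse /ac_form; trunc_ring. Qed.
HB.instance Definition _ := GRing.isZmodMorphism.Build _ _ (ac_collapse la lc be)
  ac_collapse_is_zmod_morphism.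
HB.instance Definition _ := GRing.isMonoidMorphism.Build _ _ (ac_collapse la lc be)
  ac_collapse_is_monoid_morphism.
HB.instance Definition _ := GRing.isScalable.Build _ _ _ _ (ac_collapse la lc be)
  ac_collapse_is_scalable.

Lemma ac_form_in12 (x : T) : in12 x -> ac_form la lc be x = la * coef_a x + lc * coef_c x.
Proof. by case=> x1 x2 _ _; rewrite /ac_form x1 x2 subrr mulr0 subr0. Qed.

Lemma ac_form_in21 (x : T) : in21 x -> ac_form la lc be x = 0.
Proof. by case=> x1 x2 xa xc; rewrite /ac_form x1 x2 xa xc; ring. Qed.

Lemma ac_form_flip_in12 (x : T) : in12 x -> ac_form la lc be (trunc_flip x) = 0.
Proof. by case=> x1 x2 xb xd; rewrite /ac_form /= x1 x2 xb xd; ring. Qed.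

Lemma ac_form_flip_in21 (x : T) :
  in21 x -> ac_form la lc be (trunc_flip x) = la * coef_d x + lc * coef_b x.
Proof. by case=> x1 x2 _ _; rewrite /ac_form /= x1 x2 subrr mulr0 subr0. Qed.

End ACCollapse.

Lemma balanced_idempotent_coef_a (E : T) :
  E * E = E -> coef_e1 E = coef_e2 E ->
  coef_a E = 0 /\
  forall x, x = E * x * (1 - E) \/ x = (1 - E) * x * E -> coef_a x = 0.
Proof.
move=> idem bal.
have [s | s] : coef_e1 E = 0 \/ coef_e1 E = 1.
  by apply: field_idempotent; rewrite -coef_e1M idem.
all: suff Ea : coef_a E = 0
  by split=> // x [] ->; trunc_unfold; rewrite -bal s Ea; ring.
all: move: (congr1 (@coef_a _ _) idem); trunc_unfold; rewrite -bal s.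
  by rewrite mul0r mulr0 addr0.
by rewrite mul1r mulr1 => /eqP; rewrite -subr_eq0 addrK => /eqP.
Qed.

End Trunc.

Arguments trunc_flip {K p}.

Section SurjectionOntoTrunc.
Variables (K : fieldType) (p q : K) (A : algType K) (e1 e2 a b c d : A).
Hypothesis HA : is_Aq q e1 e2 a b c d.
Variable psi : {lrmorphism A -> trunc p}.
Hypothesis psi_surj : forall t, exists x, psi x = t.

Lemma ac_form_gens_eq0 la lc be :
  ac_form la lc be (psi e1) = 0 -> ac_form la lc be (psi a) = 0 ->
  ac_form la lc be (psi b) = 0 -> ac_form la lc be (psi c) = 0 ->
  ac_form la lc be (psi d) = 0 -> la = 0 /\ lc = 0.
Proof.
move=> h1 ha hb hc hd.
have collapse_psi : ac_collapse la lc be \o psi =1 ac_collapse 0 0 0 \o psi.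
  by apply: (Aq_morph_eq HA) => /=; rewrite /ac_collapse ac_form0 ?h1 ?ha ?hb ?hc ?hd.
have ac_form_eq0 (t : trunc p) : ac_form la lc be t = 0.
  have [x <-] := psi_surj t.
  by have := congr1 (@coef_a _ _) (collapse_psi x); rewrite /= ac_form0.
have := ac_form_eq0 (trunc_a p); have := ac_form_eq0 (trunc_c p).
by rewrite /ac_form /= => hc' ha'; split; [rewrite -ha' | rewrite -hc']; ring.
Qed.

Lemma trunc_image_unbalanced : coef_e1 (psi e1) != coef_e2 (psi e1).
Proof.
apply/eqP => bal; have rels := rels_morph psi HA.1.
have [[_ idem _ _ _] [[ha hc hb hd] _]] := rels; have e2E := Aq_rels_e2 rels.
have [Ea corner_a] := balanced_idempotent_coef_a idem bal.
have ac_form_a (x : trunc p) : ac_form 1 0 0 x = coef_a x by rewrite /ac_form; ring.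
have [/eqP] : (1 : K) = 0 /\ (0 : K) = 0.
  apply: (ac_form_gens_eq0 (be := 0)); rewrite ac_form_a //; apply: corner_a; rewrite -e2E.
  - by left.
  - by right.
  - by left.
  - by right.
by rewrite oner_eq0.
Qed.

End SurjectionOntoTrunc.

Lemma trunc_image_param_e1 (K : fieldType) (p q : K) (A : algType K)
    (e1 e2 a b c d : A) (psi : {lrmorphism A -> trunc p}) :
  p != 0 -> q != 0 -> is_Aq q e1 e2 a b c d -> (forall t, exists x, psi x = t) ->
  coef_e1 (psi e1) = 1 -> coef_e2 (psi e1) = 0 -> p = q \/ p = q^-1.
Proof.
move=> p0 q0 HA psi_surj E1 E2; have rels := rels_morph psi HA.1.
have [_ [[ha hc hb hd] [hab hba]]] := rels; have e2E := Aq_rels_e2 rels.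
have a12 : in12 (psi a) by rewrite ha e2E; apply: corner12.
have c12 : in12 (psi c) by rewrite hc e2E; apply: corner12.
have b21 : in21 (psi b) by rewrite hb e2E; apply: corner21.
have d21 : in21 (psi d) by rewrite hd e2E; apply: corner21.
have dM : coef_a (psi a) * coef_c (psi c) - coef_a (psi c) * coef_c (psi a) != 0.
  apply: det2_neq0 => x y ha' hc'.
  apply: (ac_form_gens_eq0 HA psi_surj (be := x * coef_a (psi e1) + y * coef_c (psi e1))).
  - by rewrite /ac_form E1 E2 subr0 mulr1 subrr.
  - by rewrite ac_form_in12.
  - by rewrite ac_form_in21.
  - by rewrite ac_form_in12.
  - by rewrite ac_form_in21.
have dN : coef_b (psi b) * coef_d (psi d) - coef_b (psi d) * coef_d (psi b) != 0.
  apply: det2_neq0 => x y hb' hd'; suff [-> ->] : y = 0 /\ x = 0 by [].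
  (* the b, d coordinates of psi are the c, a coordinates of trunc_flip \o psi *)
  apply: (ac_form_gens_eq0 HA (psi := trunc_flip \o psi) (trunc_flip_surj p0 psi_surj)
    (be := - (y * coef_d (psi e1) + x * coef_b (psi e1)))) => /=.
  - by rewrite /ac_form /= E1 E2; ring.
  - by rewrite ac_form_flip_in12.
  - by rewrite ac_form_flip_in21 // addrC.
  - by rewrite ac_form_flip_in12.
  - by rewrite ac_form_flip_in21 // addrC.
have [ab_ab ab_ad ab_cb] := mul_in12_in21 a12 b21.
have [cd_ab cd_ad cd_cb] := mul_in12_in21 c12 d21.
have [ba_dc ba_bc ba_da] := mul_in21_in12 b21 a12.
have [dc_dc dc_bc dc_da] := mul_in21_in12 d21 c12.
apply: (quadratic_relations_param q0 dM dN).
- by rewrite -ab_ab -cd_ab hab.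
- by rewrite -ab_ad -cd_ad hab.
- by rewrite -ab_cb -cd_cb hab.
- by rewrite -ba_dc -dc_dc hba trunc_scaleE.
- by rewrite -ba_bc -dc_bc hba trunc_scaleE.
- by rewrite -ba_da -dc_da hba trunc_scaleE.
Qed.

Lemma trunc_image_param (K : fieldType) (p q : K) (A : algType K)
    (e1 e2 a b c d : A) (psi : {lrmorphism A -> trunc p}) :
  p != 0 -> q != 0 -> is_Aq q e1 e2 a b c d -> (forall t, exists x, psi x = t) ->
  p = q \/ p = q^-1.
Proof.
move=> p0 q0 HA psi_surj.
have [_ idem _ _ _] := (rels_morph psi HA.1).1.
have unbalanced := trunc_image_unbalanced HA psi_surj.
have [s1 | s1] : coef_e1 (psi e1) = 0 \/ coef_e1 (psi e1) = 1.
  by apply: field_idempotent; rewrite -coef_e1M idem.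
all: have [s2 | s2] : coef_e2 (psi e1) = 0 \/ coef_e2 (psi e1) = 1.
all: try by apply: field_idempotent; rewrite -coef_e2M idem.
all: rewrite s1 s2 ?eqxx ?oner_eq0 // in unbalanced.
  by apply: (trunc_image_param_e1 (psi := trunc_flip \o psi) p0 q0 HA);
    [exact: trunc_flip_surj | exact: s2 | exact: s1].
exact: trunc_image_param_e1 p0 q0 HA psi_surj s1 s2.
Qed.

Theorem proposition3p7 (K : closedFieldType) (hchar : [pchar K] =i pred0)
    (p q : K) (hp : p != 0) (hq : q != 0)
    (Ap : algType K) (p1 p2 pa pb pc pd : Ap)
    (Aq : algType K) (q1 q2 qa qb qc qd : Aq) :
  is_Aq p p1 p2 pa pb pc pd ->
  is_Aq q q1 q2 qa qb qc qd ->
  (alg_iso Aq Ap <-> (p = q \/ p = q^-1)).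
Proof.
move=> Hp Hq; split.
  case=> phi [phi_inv _ phi_invK]; have [rho rho_surj] := trunc_quotient Hp.
  apply: (trunc_image_param (psi := rho \o phi) hp hq Hq) => t.
  by have [y <-] := rho_surj t; exists (phi_inv y); rewrite /= phi_invK.
case=> pq; rewrite pq in Hp; first exact: is_Aq_iso Hq Hp.
exact: is_Aq_iso Hq (is_Aq_swap hq Hp).
Qed.
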